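(* Let $(N,\mathcal{M})$ be a matroid of rank $K$, $Z$ monotone submodular with $Z(\emptyset)=0$, $G=(g_1,\dots,g_K)$ the output of a run of GREEDY, and $\Omega$ an optimal basis ordered as $(\omega_1,\dots,\omega_K)$ so that $G^{i-1}\cup\{\omega_i\}\in\mathcal{M}$ for all $i$ and $\omega_i\in G\cap\Omega$ implies $\omega_i=g_i$. Then for every $t\in\{1,\dots,K\}$ and every $i$ with $\omega_i\in\Omega\setminus G$: $$\rho_{\omega_i}(G^{t-1})\le\begin{cases}\rho_t, & i>t,\\[2pt] \dfrac{\rho_i}{d_i}, & 1\le i\le t.\end{cases}$$
   Context: Matroid $(N,\mathcal{M})$ of rank $K$ (independent sets containing $\emptyset$, closed under subsets, with augmentation); basis = independent set of size $K$; optimal basis = basis maximizing $Z$ over $\mathcal{M}$. $\rho_q(S)=Z(S\cup\{q\})-Z(S)$; $S_\bot=\{j\in N\setminus S:S\cup\{j\}\in\mathcal{M}\}$. GREEDY: $G^0=\emptyset$; for $i=1,\dots,K$ choose $g_i\in\arg\max\{\rho_q(G^{i-1}):q\in G^{i-1}_\bot\}$, $G^i=G^{i-1}\cup\{g_i\}$, $G=G^K$, $\rho_i=\rho_{g_i}(G^{i-1})$. Discriminant $d_i=\rho_{g_i}(G^{i-1})/\max\{\rho_{g'}(G^{i-1}):g'\in G^{i-1}_\bot,g'\ne g_i\}$ ($=\infty$ if the maximum is $0$); $\rho_i/\infty=0$. *)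

From HB Require Import structures.
From mathcomp Require Import all_boot all_order all_algebra.
Set Implicit Arguments. Unset Strict Implicit. Unset Printing Implicit Defensive.
Import Order.TTheory GRing.Theory Num.Theory.
Local Open Scope ring_scope.

Section Defs.
Variable T : finType.
Variable R : realFieldType.

Definition is_matroid (M : {set {set T}}) : Prop :=
  [/\ set0 \in M,
      (forall A B : {set T}, B \in M -> A \subset B -> A \in M) &
      (forall A B : {set T}, A \in M -> B \in M -> (#|A| < #|B|)%N ->
         exists2 x, x \in B :\: A & x |: A \in M)].

Definition matroid_rank (M : {set {set T}}) (K : nat) : Prop :=
  (exists2 B, B \in M & #|B| = K) /\ (forall B, B \in M -> (#|B| <= K)%N).

Definition is_basis (M : {set {set T}}) (K : nat) (B : {set T}) : Prop :=
  B \in M /\ #|B| = K.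

Definition optimal_basis (M : {set {set T}}) (K : nat) (Z : {set T} -> R)
  (B : {set T}) : Prop :=
  is_basis M K B /\ (forall B', is_basis M K B' -> Z B' <= Z B).

Definition monotone (Z : {set T} -> R) : Prop :=
  forall A B : {set T}, A \subset B -> Z A <= Z B.

Definition submodular (Z : {set T} -> R) : Prop :=
  forall A B : {set T}, Z (A :|: B) + Z (A :&: B) <= Z A + Z B.

Definition rho (Z : {set T} -> R) (q : T) (S : {set T}) : R :=
  Z (q |: S) - Z S.

Definition perp (M : {set {set T}}) (S : {set T}) : {set T} :=
  [set j | (j \notin S) && (j |: S \in M)].

(* G^i = {g_1, ..., g_i}, sequences indexed from 1 *)
Definition Gpre (g : nat -> T) (i : nat) : {set T} :=
  [set x | [exists j : 'I_i, g j.+1 == x]].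

Definition greedy_run (M : {set {set T}}) (K : nat) (Z : {set T} -> R)
  (g : nat -> T) : Prop :=
  forall i : nat, (1 <= i <= K)%N ->
    g i \in perp M (Gpre g i.-1) /\
    (forall q, q \in perp M (Gpre g i.-1) ->
       rho Z q (Gpre g i.-1) <= rho Z (g i) (Gpre g i.-1)).

Definition rho_i (Z : {set T} -> R) (g : nat -> T) (i : nat) : R :=
  rho Z (g i) (Gpre g i.-1).

(* extended positive value for the discriminant *)
Inductive extR := Fin of R | Inf.

(* max{ rho_{g'}(G^{i-1}) : g' in G^{i-1}_bot, g' <> g_i }  (all candidates
   have nonnegative gains under monotonicity; empty max taken as 0) *)
Definition max_other (M : {set {set T}}) (Z : {set T} -> R) (g : nat -> T)
  (i : nat) : R :=
  \big[Num.max/0]_(q in perp M (Gpre g i.-1) | q != g i)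
     rho Z q (Gpre g i.-1).

Definition discriminant (M : {set {set T}}) (Z : {set T} -> R) (g : nat -> T)
  (i : nat) : extR :=
  if max_other M Z g i == 0 then Inf
  else Fin (rho_i Z g i / max_other M Z g i).

Definition div_ext (x : R) (d : extR) : R :=
  match d with Fin r => x / r | Inf => 0 end.

End Defs.

From HB Require Import structures.
From mathcomp Require Import all_boot all_order all_algebra.
Set Implicit Arguments. Unset Strict Implicit. Unset Printing Implicit Defensive.
Import Order.TTheory GRing.Theory Num.Theory.
Local Open Scope ring_scope.

(** For [i > t], [omega_i] is still a legal candidate at step [t] of GREEDY,
    which chose [g_t] of maximal gain.  For [i <= t], diminishing returns give
    [rho_{omega_i}(G^{t-1}) <= rho_{omega_i}(G^{i-1})], and [omega_i] was a
    candidate other than [g_i] at step [i]: its gain is bounded both by [rho_i]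
    and by the runner-up gain [rho_i / d_i]. *)

Section GreedyPrefixes.
Variable T : finType.

Lemma subset_Gpre (g : nat -> T) (a b : nat) :
  (a <= b)%N -> Gpre g a \subset Gpre g b.
Proof.
move=> le_ab; apply/subsetP => x; rewrite !inE => /existsP [j gj].
by apply/existsP; exists (widen_ord le_ab j).
Qed.

Lemma mem_Gpre (g : nat -> T) (i K : nat) :
  (1 <= i <= K)%N -> g i \in Gpre g K.
Proof.
case: i => [//|i] /= lt_iK; rewrite inE; apply/existsP.
by exists (Ordinal lt_iK).
Qed.

Lemma perpS (M : {set {set T}}) (A B : {set T}) x :
  (forall C D : {set T}, D \in M -> C \subset D -> C \in M) ->
  A \subset B -> x \in perp M B -> x \in perp M A.
Proof.
move=> hereditary sAB; rewrite !inE => /andP [xNB xBM].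
rewrite (contra (subsetP sAB x)) //=.
by apply: hereditary xBM _; apply: setUS.
Qed.

End GreedyPrefixes.

Section Gains.
Variables (T : finType) (R : realFieldType) (Z : {set T} -> R).

Lemma rho_antimonotone x (A B : {set T}) :
  monotone Z -> submodular Z -> A \subset B -> rho Z x B <= rho Z x A.
Proof.
move=> monoZ submodZ sAB; rewrite /rho lerBlDr addrAC lerBrDr.
have -> : x |: B = (x |: A) :|: B by rewrite -setUA (setUidPr sAB).
apply: le_trans (submodZ (x |: A) B); rewrite lerD2l.
by apply: monoZ; rewrite subsetI sAB subsetUr.
Qed.

Lemma rho_le_max_other (M : {set {set T}}) (g : nat -> T) i q :
  q \in perp M (Gpre g i.-1) -> q != g i ->
  rho Z q (Gpre g i.-1) <= max_other M Z g i.
Proof.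
move=> q_perp q_gi; rewrite /max_other.
by apply: (le_bigmax_cond _ (P := fun q => (q \in _) && (q != g i))); rewrite /= q_perp.
Qed.

(* When [rho_i = 0] the quotient [rho_i / d_i] is the junk value [0 / 0 = 0],
   so the hypothesis [x <= rho_i] is what covers that case. *)
Lemma le_div_ext_discriminant (M : {set {set T}}) (g : nat -> T) i x :
  x <= rho_i Z g i -> x <= max_other M Z g i ->
  x <= div_ext (rho_i Z g i) (discriminant M Z g i).
Proof.
rewrite /discriminant /div_ext; case: eqP => [-> //| /eqP m_neq0] x_rho x_m.
have [rho0 | rho_neq0] := eqVneq (rho_i Z g i) 0.
  by rewrite rho0 mul0r -rho0.
by rewrite invf_div mulrCA divff // mulr1.
Qed.

End Gains.

Theorem lemma11 (T : finType) (R : realFieldType) (M : {set {set T}}) (K : nat)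
  (Z : {set T} -> R) (g omega : nat -> T) (Omega : {set T}) :
  is_matroid M -> matroid_rank M K ->
  monotone Z -> submodular Z -> Z set0 = 0 ->
  greedy_run M K Z g ->
  optimal_basis M K Z Omega ->
  Omega = Gpre omega K ->
  (forall i, (1 <= i <= K)%N -> omega i |: Gpre g i.-1 \in M) ->
  (forall i, (1 <= i <= K)%N -> omega i \in Gpre g K :&: Omega ->
     omega i = g i) ->
  forall t i, (1 <= t <= K)%N -> (1 <= i <= K)%N ->
    omega i \in Omega :\: Gpre g K ->
    rho Z (omega i) (Gpre g t.-1) <=
      (if (t < i)%N then rho_i Z g t
       else div_ext (rho_i Z g i) (discriminant M Z g i)).
Proof.
move=> [_ hereditary _] _ monoZ submodZ _ greedy _ _ omega_indep _ t i t_K i_K.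
rewrite inE => /andP [omegaNG _].
have omega_perp : omega i \in perp M (Gpre g i.-1).
  rewrite inE omega_indep // andbT; apply: contra omegaNG; apply/subsetP.
  by apply: subset_Gpre; case/andP: i_K => _; apply: leq_trans (leq_pred i).
case: ifP => [lt_ti | /negbT le_it].
  apply: (greedy t t_K).2; apply: perpS omega_perp => //.
  by apply: subset_Gpre; rewrite -!subn1 leq_sub2r // ltnW.
rewrite -leqNgt in le_it.
have le_prefix : (i.-1 <= t.-1)%N by rewrite -!subn1 leq_sub2r.
apply: le_trans (rho_antimonotone (omega i) monoZ submodZ (subset_Gpre g le_prefix)) _.
apply: le_div_ext_discriminant; first exact: (greedy i i_K).2.
apply: rho_le_max_other => //; apply: contraNneq omegaNG => ->.
exact: mem_Gpre.
Qed.
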